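(* Let $m\ge2$, $n\ge1$, let $G_m=BS(1,m)=\langle a,t\mid tat^{-1}=a^m\rangle$ and let $A_m$ be the normal subgroup of $G_m$ generated by $a$ (so $G_m=A_m\rtimes\langle t\rangle$ with $A_m\cong\mathbb Z[1/m]$). (1) If $\rho:G_m\to T_n(\mathbb Z[1/m])$ is a special representation, then $\rho^{-1}(U_n(\mathbb Z[1/m]))=A_m$. (2) If $m$ is even, then every injective homomorphism $\rho:G_m\to T_n(\mathbb Z[1/m])$ is a special representation.
   Context: $T_n(\mathbb Z[1/m])$ is the group of invertible upper triangular $n\times n$ matrices over $\mathbb Z[1/m]$ (i.e. upper triangular with diagonal entries in $(\mathbb Z[1/m])^\times$), and $U_n(\mathbb Z[1/m])$ is its subgroup of matrices with all diagonal entries $1$. A special representation of $G_m$ is an injective homomorphism $\rho:G_m\to T_n(\mathbb Z[1/m])$ with $\rho(A_m)\subseteq U_n(\mathbb Z[1/m])$. *)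

From HB Require Import structures.
From mathcomp Require Import all_boot all_order all_algebra.
Set Implicit Arguments. Unset Strict Implicit. Unset Printing Implicit Defensive.
Import Order.TTheory GRing.Theory Num.Theory.
Local Open Scope ring_scope.

(* Z[1/m] as a subring of Q: rationals q with q * m^k an integer for some k. *)
Definition Zinv (m : nat) (q : rat) : Prop :=
  exists (k : nat) (z : int), q * (m%:R) ^+ k = z%:~R.

Definition Zinv_unit (m : nat) (q : rat) : Prop :=
  Zinv m q /\ q != 0 /\ Zinv m q^-1.

Definition Tmat (m n : nat) (M : 'M[rat]_n) : Prop :=
  (forall i j, Zinv m (M i j)) /\
  (forall i j : 'I_n, (j < i)%N -> M i j = 0) /\
  (forall i, Zinv_unit m (M i i)).

Definition Umat (m n : nat) (M : 'M[rat]_n) : Prop :=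
  Tmat m M /\ (forall i, M i i = 1).

(* Model of G_m = BS(1,m) = Z[1/m] x| <t>: the element (k, b) is the affine map
   x |-> m^k x + b of Q (k : int, b in Z[1/m]).  a = (0,1) : x |-> x+1,
   t = (1,0) : x |-> m x, and t a t^-1 = a^m.  A_m = normal closure of a
   = the translations {(0,b) | b in Z[1/m]}. *)
Definition BS := (int * rat)%type.
Definition BSmem (m : nat) (g : BS) : Prop := Zinv m g.2.
Definition BSmul (m : nat) (g h : BS) : BS :=
  (g.1 + h.1, (m%:R : rat) ^ g.1 * h.2 + g.2).
Definition BSa : BS := (0, 1).
Definition BSt : BS := (1, 0).
Definition inA (g : BS) : Prop := g.1 = 0.

Definition is_rep (m n : nat) (rho : BS -> 'M[rat]_n) : Prop :=
  (forall g h, BSmem m g -> BSmem m h -> rho (BSmul m g h) = rho g *m rho h) /\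
  (forall g, BSmem m g -> Tmat m (rho g)).

Definition rep_injective (m n : nat) (rho : BS -> 'M[rat]_n) : Prop :=
  forall g h, BSmem m g -> BSmem m h -> rho g = rho h -> g = h.

Definition special_rep (m n : nat) (rho : BS -> 'M[rat]_n) : Prop :=
  is_rep m rho /\ rep_injective m rho /\
  (forall g, BSmem m g -> inA g -> Umat m (rho g)).

Set Warnings "-notation-overridden,-ambiguous-paths".
From mathcomp Require Import all_boot all_order all_algebra zify.
Set Implicit Arguments. Unset Strict Implicit. Unset Printing Implicit Defensive.
Import Order.TTheory GRing.Theory Num.Theory.
Local Open Scope ring_scope.

(* (1) A special representation rho sends a = (0,1) to a unipotent matrix U.
   If rho (t^k b) were unipotent with k <> 0, then so would be V = rho (t^|k|),
   and V U V^-1 = U^N with N = m^|k| <> 1.  A unipotent U conjugate to U^N by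
   a unipotent V is the identity: by induction on d, the superdiagonals
   1..d of U vanish, because on the first possibly nonzero superdiagonal the
   entries of U^N are N times those of U, while conjugation by V does not
   change them.  But U = 1 contradicts injectivity (rho (a^2) = rho a).
   (2) Each diagonal entry chi of rho is a character G_m -> Q^x; from
   t a t^-1 = a^m we get chi(a)^(m-1) = 1, so chi(a) = 1 when m - 1 is odd,
   and then chi is trivial on all of A_m = {t^-l a^z t^l}. *)

Section UpperTriangular.
Variable n : nat.
Implicit Types (A B U V : 'M[rat]_n) (i j k : 'I_n).

Definition upper_tri A := forall i j, (j < i)%N -> A i j = 0.
Definition unitdiag A := forall i, A i i = 1.
Definition unipotent A := upper_tri A /\ unitdiag A.

Definition zero_superdiags (d : nat) A := forall i j, (i < j < i + d)%N -> A i j = 0.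

Lemma mulmx_diag A B i : upper_tri A -> upper_tri B ->
  (A *m B) i i = A i i * B i i.
Proof.
move=> uA uB; rewrite !mxE (bigD1 i) //= big1 ?addr0 // => k nki.
case: (ltngtP k i) => [ki|ik|/val_inj eki]; first by rewrite uA ?mul0r.
  by rewrite uB ?mulr0.
by rewrite eki eqxx in nki.
Qed.

Lemma mulmx_upper_tri A B : upper_tri A -> upper_tri B -> upper_tri (A *m B).
Proof.
move=> uA uB i j ji; rewrite !mxE big1 // => k _.
case: (ltnP k i) => [ki|ik]; first by rewrite uA ?mul0r.
by rewrite uB ?mulr0 //; apply: leq_trans ji ik.
Qed.

Lemma unipotent1 : unipotent 1%:M.
Proof.
split=> [i j ji|i]; last by rewrite mxE eqxx.
by rewrite mxE; case: eqP => // eij; rewrite eij ltnn in ji.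
Qed.

Lemma unipotentM A B : unipotent A -> unipotent B -> unipotent (A *m B).
Proof.
move=> [uA dA] [uB dB]; split; first exact: mulmx_upper_tri.
by move=> i; rewrite mulmx_diag // dA dB mulr1.
Qed.

Lemma unipotentX U N : unipotent U -> unipotent (U ^+ N).
Proof.
move=> hU; elim: N => [|N IH]; first exact: unipotent1.
by rewrite exprS -mulmxE; apply: unipotentM.
Qed.

Lemma mulmx_entry_sum A B i j : unipotent A -> unipotent B -> (i < j)%N ->
  (forall k, (i < k < j)%N -> A i k = 0 \/ B k j = 0) ->
  (A *m B) i j = A i j + B i j.
Proof.
move=> [uA dA] [uB dB] ij hmid.
rewrite mxE (bigD1 i) // (bigD1 j) /=; last by rewrite -val_eqE /= gtn_eqF.
rewrite big1 ?addr0; first by rewrite dA dB mul1r mulr1 addrC.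
move=> k /andP[nki nkj].
case: (ltnP k i) => [ki|ik]; first by rewrite uA ?mul0r.
case: (ltnP j k) => [jk|kj]; first by rewrite uB ?mulr0.
have ikj : (i < k < j)%N.
  move: nki nkj; rewrite -!val_eqE /= => nki nkj.
  by rewrite !ltn_neqAle ik kj eq_sym nki nkj.
by case: (hmid k ikj) => ->; rewrite ?mul0r ?mulr0.
Qed.

Lemma mulmx_entry_low d A B i j : unipotent A -> unipotent B ->
  zero_superdiags d A \/ zero_superdiags d B -> (i < j <= i + d)%N ->
  (A *m B) i j = A i j + B i j.
Proof.
move=> hA hB zAB /andP[ij jd]; apply: mulmx_entry_sum => // k /andP[ik kj].
by case: zAB => [zA|zB]; [left; apply: zA | right; apply: zB]; lia.
Qed.

Lemma expmx_entry_low d U N i j : unipotent U -> zero_superdiags d U ->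
  (i < j <= i + d)%N -> (U ^+ N) i j = N%:R * U i j.
Proof.
move=> hU zU hij; elim: N => [|N IH].
  by rewrite mul0r expr0 mxE; case: eqP => // eij; rewrite eij ltnn in hij.
rewrite exprS -mulmxE (mulmx_entry_low hU (unipotentX N hU) _ hij); last by left.
by rewrite IH !mulr_natl mulrS.
Qed.

Lemma zero_superdiagsX d U N : unipotent U -> zero_superdiags d U ->
  zero_superdiags d (U ^+ N).
Proof.
move=> hU zU i j hij; rewrite (expmx_entry_low _ hU zU) ?zU ?mulr0 //.
by case/andP: hij => -> /ltnW.
Qed.

Section ConjugatePower.
Variables (U V : 'M[rat]_n) (N : nat).
Hypotheses (hU : unipotent U) (hV : unipotent V).
Hypotheses (conjUV : V *m U = U ^+ N *m V) (N_neq1 : N != 1%N).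

(* Conjugation by V fixes the first possibly nonzero superdiagonal of U,
   while raising to the power N multiplies it by N <> 1. *)
Lemma zero_superdiags_step d : zero_superdiags d U -> zero_superdiags d.+1 U.
Proof.
move=> zU i j hij.
have low : (i < j <= i + d)%N by rewrite addnS in hij.
have := congr1 (fun M : 'M[rat]_n => M i j) conjUV => /=.
rewrite (mulmx_entry_low hV hU _ low); last by right.
rewrite (mulmx_entry_low (unipotentX N hU) hV _ low); last first.
  by left; apply: zero_superdiagsX.
rewrite (expmx_entry_low _ hU zU low) addrC => /addIr /eqP.
rewrite -subr_eq0 -{1}[U i j]mul1r -mulrBl mulf_eq0 subr_eq0 eq_sym pnatr_eq1.
by rewrite (negPf N_neq1) => /eqP.
Qed.

Lemma conj_power_unipotent_trivial : U = 1%:M.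
Proof.
have zU d : zero_superdiags d U.
  elim: d => [i j /andP[ij ji]|d]; last exact: zero_superdiags_step.
  by rewrite addn0 ltnNge (ltnW ij) in ji.
apply/matrixP=> i j; rewrite mxE.
case: (ltngtP i j) => [ij|ji|/val_inj <-]; last by rewrite eqxx hU.2.
  by rewrite (zU n) ?ij ?ltn_addl //; case: eqP => // eij; rewrite eij ltnn in ij.
by rewrite hU.1 //; case: eqP => // eij; rewrite eij ltnn in ji.
Qed.

End ConjugatePower.
End UpperTriangular.

Lemma Zinv_int m (z : int) : Zinv m z%:~R.
Proof. by exists 0%N, z; rewrite expr0 mulr1. Qed.

Lemma Zinv_nat m (k : nat) : Zinv m k%:R.
Proof. exact: Zinv_int m k. Qed.

Lemma Zinv_opp m x : Zinv m x -> Zinv m (- x).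
Proof. by case=> l [z hz]; exists l, (- z); rewrite mulNr hz intrN. Qed.

Lemma BSmul_translations m x y : BSmul m (0, x) (0, y) = (0, x + y).
Proof. by rewrite /BSmul /= addr0 expr0z mul1r addrC. Qed.

Lemma BSmul_conj m (k : nat) x :
  BSmul m (Posz k, 0) (0, x) = BSmul m (0, (m%:R ^+ k) * x) (Posz k, 0).
Proof. by rewrite /BSmul /= mulr0 !addr0 !add0r -exprnP. Qed.

Section Characters.
Variables (m : nat) (chi : BS -> rat).
Hypothesis chiM : forall g h, BSmem m g -> BSmem m h ->
  chi (BSmul m g h) = chi g * chi h.
Hypothesis chi_neq0 : forall g, BSmem m g -> chi g != 0.

Let mem_int (k z : int) : BSmem m (k, z%:~R) := Zinv_int m z.

Lemma char_origin : chi (0, 0) = 1.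
Proof.
have e := chiM (mem_int 0 0) (mem_int 0 0); rewrite BSmul_translations addr0 in e.
by apply: (mulfI (chi_neq0 (mem_int 0 0))); rewrite mulr1 -e.
Qed.

Lemma char_translation_nat (N : nat) : chi (0, N%:R) = chi (0, 1) ^+ N.
Proof.
elim: N => [|N IH]; first exact: char_origin.
rewrite -addn1 natrD -(BSmul_translations m) (chiM (mem_int 0 N) (mem_int 0 1)).
by rewrite IH exprD expr1.
Qed.

Lemma char_translation_int (z : int) : chi (0, 1) = 1 -> chi (0, z%:~R) = 1.
Proof.
move=> chi_a; case: z => p; first by rewrite char_translation_nat chi_a expr1n.
have e := chiM (mem_int 0 (- p.+1%:Z)) (mem_int 0 p.+1).
rewrite BSmul_translations addNr char_origin char_translation_nat chi_a in e.
by rewrite expr1n mulr1 in e; rewrite NegzE -e.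
Qed.

(* A character trivial on a is trivial on A_m: if b m^l = z is an integer
   then t^l a^b = a^z t^l, so chi(a^b) = chi(a^z) = 1. *)
Lemma char_translation_trivial b : chi (0, 1) = 1 -> Zinv m b -> chi (0, b) = 1.
Proof.
move=> chi_a hb; have [l [z hz]] := hb.
have mem_tl : BSmem m (Posz l, 0) by exact: Zinv_int m 0.
have e := BSmul_conj m l b; rewrite mulrC hz in e.
move: (chiM mem_tl (hb : BSmem m (0, b))).
rewrite e (chiM (mem_int 0 z) mem_tl) char_translation_int // mul1r.
by rewrite -{1}[chi _]mulr1 => /mulfI -> //; apply: chi_neq0.
Qed.

(* The relation t a t^-1 = a^m gives chi(a)^m = chi(a). *)
Lemma char_generator_fixed : chi (0, 1) ^+ m = chi (0, 1).
Proof.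
have mem_t : BSmem m (1, 0) by exact: mem_int 1 0.
have e := BSmul_conj m 1 1; rewrite expr1 mulr1 in e.
move: (chiM mem_t (mem_int 0 1)); rewrite e (chiM (mem_int 0 m) mem_t).
by rewrite char_translation_nat mulrC => /mulfI -> //; apply: chi_neq0.
Qed.

End Characters.

Lemma odd_root_of_unity (R : realDomainType) (x : R) (k : nat) :
  odd k -> x ^+ k = 1 -> x = 1.
Proof.
move=> odd_k xk.
have nx : `|x| = 1.
  apply/eqP; rewrite -(@pexpr_eq1 _ _ k) ?normr_ge0 //; last by case: k odd_k {xk}.
  by rewrite -normrX xk normr1.
case: (lerP 0 x) => [x_ge0|x_lt0]; first by rewrite -(ger0_norm x_ge0).
have x_m1 : x = -1 by rewrite -nx ltr0_norm // opprK.
by rewrite -xk x_m1 -signr_odd odd_k expr1.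
Qed.

Section Representation.
Variables (m n : nat) (rho : BS -> 'M[rat]_n).
Hypothesis rho_rep : is_rep m rho.

Lemma rep_upper_tri g : BSmem m g -> upper_tri (rho g).
Proof. by move=> hg; have [_ [? _]] := rho_rep.2 g hg. Qed.

Lemma rep_diagM g h i : BSmem m g -> BSmem m h ->
  rho (BSmul m g h) i i = rho g i i * rho h i i.
Proof.
by move=> hg hh; rewrite rho_rep.1 // mulmx_diag //; apply: rep_upper_tri.
Qed.

Lemma rep_diag_neq0 g i : BSmem m g -> rho g i i != 0.
Proof. by move=> hg; have [_ [_ /(_ i) [_ []]]] := rho_rep.2 g hg. Qed.

Lemma rep_translation_pow (N : nat) : rho (0, N.+1%:R) = rho (0, 1) ^+ N.+1.
Proof.
elim: N => [|N IH]; first by rewrite expr1.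
rewrite -addn1 natrD -(BSmul_translations m) rho_rep.1; try exact: Zinv_nat.
by rewrite IH mulmxE addn1 -exprSr.
Qed.

Lemma even_rep_special : (0 < m)%N -> ~~ odd m ->
  forall g, BSmem m g -> inA g -> Umat m (rho g).
Proof.
move=> m_gt0 even_m [k b] hb /= k0; rewrite /inA /= in k0; subst k.
split=> [|i]; first exact: rho_rep.2.
pose chi g := rho g i i.
have chiM g h : BSmem m g -> BSmem m h -> chi (BSmul m g h) = chi g * chi h.
  exact: rep_diagM.
have chi_neq0 g : BSmem m g -> chi g != 0 by apply: rep_diag_neq0.
apply: (char_translation_trivial chiM chi_neq0) => //.
have odd_pm : odd m.-1 by move: even_m; rewrite -(prednK m_gt0) /= negbK.
have := char_generator_fixed chiM chi_neq0.
rewrite -(prednK m_gt0) exprS -{3}(mulr1 (chi (0, 1))).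
by move=> /(mulfI (@chi_neq0 (0, 1) (Zinv_nat m 1))); apply: odd_root_of_unity.
Qed.

End Representation.

Section SpecialRepresentation.
Variables (m n : nat) (rho : BS -> 'M[rat]_n).
Hypotheses (m_gt1 : (1 < m)%N) (rho_special : special_rep m rho).

Let rho_rep : is_rep m rho := rho_special.1.

Lemma special_translation_unipotent x : Zinv m x -> unipotent (rho (0, x)).
Proof.
move=> hx; split; first exact: (rep_upper_tri rho_rep).
by have [_ ?] := rho_special.2.2 (0, x) hx erefl.
Qed.

Lemma special_t_power_not_unipotent (l : nat) : ~ unitdiag (rho (Posz l.+1, 0)).
Proof.
move=> dV; set U := rho (0, 1); set V := rho (Posz l.+1, 0).
have mem_tl : BSmem m (Posz l.+1, 0) by exact: Zinv_int m 0.
have mem_a : BSmem m (0, 1) := Zinv_nat m 1.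
have hU : unipotent U by apply: special_translation_unipotent.
have hV : unipotent V by split=> //; apply: (rep_upper_tri rho_rep).
have m_pos : (0 < m ^ l.+1)%N by rewrite expn_gt0 ltnW.
have conjUV : V *m U = U ^+ (m ^ l.+1) *m V.
  rewrite -(prednK m_pos) -(rep_translation_pow rho_rep) prednK // natrX.
  by rewrite -!rho_rep.1 ?BSmul_conj ?mulr1 // -natrX; exact: Zinv_nat.
have N_neq1 : (m ^ l.+1 != 1)%N by have := ltn_expl l.+1 m_gt1; lia.
have U1 := conj_power_unipotent_trivial hU hV conjUV N_neq1.
have e : rho (0, 2%:R) = rho (0, 1%:R) by rewrite (rep_translation_pow rho_rep) -/U U1 expr1n.
have := rho_special.2.1 _ _ (Zinv_nat m 2 : BSmem m (0, _)) mem_a e.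
by move=> /(congr1 snd) /eqP.
Qed.

Lemma special_unipotent_inA g : BSmem m g -> Umat m (rho g) -> inA g.
Proof.
case: g => k b hb [_ dg]; rewrite /inA /=.
have mem_k : BSmem m (k, 0) by exact: Zinv_int m 0.
have mem_nk : BSmem m (- k, 0) by exact: Zinv_int m 0.
have dk : unitdiag (rho (k, 0)).
  have e : BSmul m (0, - b) (k, b) = (k, 0) by rewrite /BSmul /= add0r expr0z mul1r addrN.
  move=> i; rewrite -e (rep_diagM rho_rep) ?dg ?mulr1 //; last exact: Zinv_opp.
  by have [_ ->] := special_translation_unipotent (Zinv_opp hb).
have dnk : unitdiag (rho (- k, 0)).
  have e : BSmul m (- k, 0) (k, 0) = (0, 0) by rewrite /BSmul /= addNr mulr0 addr0.
  move=> i; have [_ d0] := special_translation_unipotent (Zinv_nat m 0).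
  by move: (d0 i); rewrite -e (rep_diagM rho_rep) // dk mulr1.
case: k {hb dg mem_k mem_nk} dk dnk => [[|l]|l] // dk dnk; exfalso.
  exact: special_t_power_not_unipotent dk.
by apply: (special_t_power_not_unipotent (l := l)); rewrite NegzE opprK in dnk.
Qed.

End SpecialRepresentation.

Theorem lemma4p5 (m n : nat) (hm : (2 <= m)%N) (hn : (1 <= n)%N) :
  (forall rho : BS -> 'M[rat]_n, special_rep m rho ->
     forall g, BSmem m g -> (Umat m (rho g) <-> inA g)) /\
  (~~ odd m -> forall rho : BS -> 'M[rat]_n,
     is_rep m rho -> rep_injective m rho -> special_rep m rho).
Proof.
split=> [rho special g hg | even_m rho rep inj].
  by split; [apply: special_unipotent_inA | apply: special.2.2].
by split=> //; split=> //; apply: even_rep_special => //; apply: ltnW.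
Qed.
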